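(* Let $X$ be a mixed-stable sequence with respect to a full BST $T$. If $GF$ serves $X$ starting with initial tree $T$, then it never restructures the tree: $T_t=T$ for every $t$.
   Context: Binary search tree model and $GF$. Keys are $\{1,\dots,n\}$ and $X=[x_1,\dots,x_m]$ is a query sequence. An algorithm serving $X$ holds a BST $T_{t-1}$ before serving $x_t$, searches $x_t$ from the root, and may then restructure by rotations into $T_t$. Greedy Future ($GF$). After finding $x_t$ in $T_{t-1}$, let $v_1<\dots<v_k$ be the keys on the root-to-$x_t$ path, set $v_0=-\infty$ and $v_{k+1}=+\infty$, and let $R_0,\dots,R_k$ be the subtrees hanging off this path. For each $i$, $\tau(v_i)$ is the smallest $s>t$ with $x_s\in(v_{i-1},v_{i+1})$, or $+\infty$ if there is none. $GF$ rearranges $v_1,\dots,v_k$ as a treap: a BST in key order and a heap in $\tau$, with the smallest $\tau$ at the top. Ties in $\tau$ are broken in favor of the node of smaller depth in $T_{t-1}$. It then reattaches $R_0,\dots,R_k$ unchanged at their unique positions, giving $T_t$. Stable sequences. Let $T$ be a full binary search tree (every inner node has exactly two children), and let $X$ be a query sequence consisting only of keys stored at leaves of $T$. For an inner node $v$, let $X_v$ be the subsequence of $X$ consisting of the queries to keys in the subtree of $v$. - The node $v$ is strongly-stable if consecutive queries of $X_v$ alternate between the left and right subtrees of $v$. - The node $v$ is weakly-stable with a left bias if its left child $u$ is an inner node and $X_v$ repeats cyclically (from some starting phase) the pattern: a query in the left subtree of $u$, then one in the right subtree of $u$, then one in the right subtree of $v$. - Weakly-stable with a right bias is the mirror image: $u$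 is the right child of $v$, and the pattern is right subtree of $u$, left subtree of $u$, left subtree of $v$. In both weakly-stable cases $u$ is called the favored child of $v$. $X$ (and $T$) is mixed-stable if every inner node of $T$ is strongly-stable or weakly-stable. *)

From mathcomp Require Import all_boot.
Set Implicit Arguments. Unset Strict Implicit. Unset Printing Implicit Defensive.

Inductive tree := Leaf | Node of tree & nat & tree.

Fixpoint inorder (T : tree) : seq nat :=
  if T is Node l k r then inorder l ++ k :: inorder r else [::].

Definition is_bst_on (n : nat) (T : tree) : Prop := inorder T = iota 1 n.

Definition is_empty (T : tree) : bool := if T is Leaf then true else false.

Definition is_inner (T : tree) : bool :=
  if T is Node l _ r then ~~ is_empty l || ~~ is_empty r else false.

Fixpoint full (T : tree) : bool :=
  if T is Node l _ r then (is_empty l == is_empty r) && full l && full r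
  else true.

Fixpoint leaf_keys (T : tree) : seq nat :=
  match T with
  | Leaf => [::]
  | Node Leaf k Leaf => [:: k]
  | Node l _ r => leaf_keys l ++ leaf_keys r
  end.

Fixpoint all_subtrees (P : tree -> Prop) (T : tree) : Prop :=
  match T with
  | Leaf => True
  | Node l _ r => P T /\ all_subtrees P l /\ all_subtrees P r
  end.

(* Stability notions.  X is 0-indexed.                                  *)
Definition subseq_at (X : seq nat) (v : tree) : seq nat :=
  [seq y <- X | y \in inorder v].

Definition strongly_stable (X : seq nat) (v : tree) : Prop :=
  match v with
  | Node l _ r =>
      let Xv := subseq_at X v in
      forall i, i.+1 < size Xv ->
        (nth 0 Xv i \in inorder l) != (nth 0 Xv i.+1 \in inorder l)
  | Leaf => False
  end.

Definition cyclic3 (cls : nat -> nat) (Xv : seq nat) : Prop :=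
  exists2 p, p < 3 & forall i, i < size Xv -> cls (nth 0 Xv i) = (p + i) %% 3.

Definition weakly_stable_left (X : seq nat) (v : tree) : Prop :=
  match v with
  | Node u _ r =>
      is_inner u /\
      match u with
      | Node ul _ ur =>
          cyclic3 (fun y => if y \in inorder ul then 0
                            else if y \in inorder ur then 1
                            else if y \in inorder r then 2 else 3)
                  (subseq_at X v)
      | Leaf => False
      end
  | Leaf => False
  end.

Definition weakly_stable_right (X : seq nat) (v : tree) : Prop :=
  match v with
  | Node l _ u =>
      is_inner u /\
      match u with
      | Node ul _ ur =>
          cyclic3 (fun y => if y \in inorder ur then 0
                            else if y \in inorder ul then 1
                            else if y \in inorder l then 2 else 3)
                  (subseq_at X v)
      | Leaf => False
      end
  | Leaf => False
  end.

Definition mixed_stable (X : seq nat) (T : tree) : Prop :=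
  all_subtrees (fun v => is_inner v ->
    strongly_stable X v \/ weakly_stable_left X v \/ weakly_stable_right X v) T.

(* Returns (R_0, [(v_1,d_1,R_1);
   ...; (v_k,d_k,R_k)]) : the keys v_1 < ... < v_k of the search path with
   their depths in T, and the subtrees hanging off the path, in key order. *)
Fixpoint collect (T : tree) (x d : nat) : tree * seq (nat * nat * tree) :=
  match T with
  | Leaf => (Leaf, [::])
  | Node l k r =>
      if x == k then (l, [:: (k, d, r)])
      else if x < k then
        let c := collect l x d.+1 in (c.1, rcons c.2 (k, d, r))
      else
        let c := collect r x d.+1 in (l, (k, d, c.1) :: c.2)
  end.

(* membership in the open interval (lo, hi); None stands for -oo / +oo *)
Definition in_open (lo hi : option nat) (y : nat) : bool :=
  (if lo is Some a then a < y else true) && (if hi is Some b then y < b else true).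

(* tau: smallest s > t with X[s] in (lo,hi); the value size X encodes +oo
   (every genuine index is < size X). *)
Definition tau (X : seq nat) (t : nat) (lo hi : option nat) : nat :=
  t.+1 + find (in_open lo hi) (drop t.+1 X).

Definition lexlt (a b : nat * nat) : bool :=
  (a.1 < b.1) || ((a.1 == b.1) && (a.2 < b.2)).

Fixpoint argmin_idx (s : seq (nat * nat)) : nat :=
  match s with
  | [::] => 0
  | a :: s' =>
      if s' is [::] then 0
      else let j := argmin_idx s' in
           if lexlt (nth a s' j) a then j.+1 else 0
  end.

(* treap construction: items are (priority, (key, R_i)), in key order,
   preceded by R_0; the smallest priority goes to the root. *)
Fixpoint build (fuel : nat) (R0 : tree)
    (ps : seq ((nat * nat) * (nat * tree))) : tree :=
  match fuel with
  | 0 => R0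
  | f.+1 =>
      match ps with
      | [::] => R0
      | _ =>
          let j := argmin_idx (map fst ps) in
          let q := nth ((0, 0), (0, Leaf)) ps j in
          Node (build f R0 (take j ps)) q.2.1 (build f q.2.2 (drop j.+1 ps))
      end
  end.

Definition gf_step (X : seq nat) (t : nat) (T : tree) : tree :=
  let x := nth 0 X t in
  let c := collect T x 0 in
  let R0 := c.1 in
  let ps := c.2 in
  let ks := map (fun e => e.1.1) ps in
  let item i :=
    let e := nth (0, 0, Leaf) ps i in
    let lo := if i is i'.+1 then Some (nth 0 ks i') else None in
    let hi := if i.+1 < size ks then Some (nth 0 ks i.+1) else None in
    ((tau X t lo hi, e.1.2), (e.1.1, e.2)) in
  build (size ps) R0 (map item (iota 0 (size ps))).

Fixpoint gf_tree (X : seq nat) (T : tree) (t : nat) : tree :=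
  if t is t'.+1 then gf_step X t' (gf_tree X T t') else T.

From mathcomp Require Import all_boot zify.
Set Implicit Arguments. Unset Strict Implicit. Unset Printing Implicit Defensive.

(* It suffices that one step of GF leaves T unchanged.  GF rebuilds the search
   path of x = X[t] as a treap on the priorities (tau, depth), so it returns T
   as soon as tau does not decrease along the path.  Let v be a path node with
   subtree S.  Every queried key in the interval of v lies in S, and stability
   of v pushes the next query to S after x into that interval (a strongly
   stable v sends it to the side not containing x; a weakly stable one to the
   next class of its cyclic pattern).  Hence tau(v) is the time of the next
   query to S.  The interval of a deeper path node w only contains keys of the
   subtree of w, which lies inside S, so tau(w) >= tau(v). *)

(** * Rebuilding a tree from its search path *)

Lemma lexlt_asym a b : lexlt a b -> ~~ lexlt b a.
Proof. by case: a b => [a1 a2] [b1 b2]; rewrite /lexlt /=; lia. Qed.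

Lemma argmin_idx_lt s : s != [::] -> argmin_idx s < size s.
Proof.
elim: s => [//|a [//|b s] IH] _ /=.
by case: ifP => // _; have := IH isT.
Qed.

Lemma argmin_idx_strict_min s i : i < size s ->
  (forall j, j < size s -> j != i -> lexlt (nth (0, 0) s i) (nth (0, 0) s j)) ->
  argmin_idx s = i.
Proof.
elim: s i => [//|a s IH] i Hi Hmin /=.
case: s IH Hi Hmin => [|b s] IH Hi Hmin; first by case: i Hi Hmin.
set s' := b :: s.
have Hs' : argmin_idx s' < size s' by apply: argmin_idx_lt.
case: i Hi Hmin => [|i] Hi Hmin.
  have := Hmin (argmin_idx s').+1 Hs' isT => /=.
  by rewrite (set_nth_default (0, 0) a Hs') => /lexlt_asym /negbTE ->.
have -> : argmin_idx s' = i by apply: IH => // j Hj Hji; exact: (Hmin j.+1).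
have Hi' : i < size s' by [].
by rewrite (set_nth_default (0, 0) a Hi') (Hmin 0).
Qed.

Lemma In_nth T (x0 : T) s i : i < size s -> List.In (nth x0 s i) s.
Proof. by elim: s i => [//|a s IH] [|i] Hi /=; [left | right; apply: IH]. Qed.

Lemma build_nil f R : build f R [::] = R.
Proof. by case: f. Qed.

Lemma collect_depth T x d e : List.In e (collect T x d).2 -> d <= e.1.2.
Proof.
elim: T d => [|l IHl k r IHr] d //=.
case: ifP => _; first by case=> // <-.
case: ifP => _ /=.
  by rewrite -cats1 List.in_app_iff => -[/IHl|[<-|//]] //=; lia.
by case=> [<-//|/IHr] /=; lia.
Qed.

Definition treap_items (ps : seq (nat * nat * tree))
    (qs : seq ((nat * nat) * (nat * tree))) : Prop :=
  [/\ size qs = size ps,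
      forall i, i < size ps -> (nth ((0, 0), (0, Leaf)) qs i).2 =
        ((nth (0, 0, Leaf) ps i).1.1, (nth (0, 0, Leaf) ps i).2)
    & forall i j, i < size ps -> j < size ps ->
        (nth (0, 0, Leaf) ps i).1.2 < (nth (0, 0, Leaf) ps j).1.2 ->
        lexlt (nth ((0, 0), (0, Leaf)) qs i).1 (nth ((0, 0), (0, Leaf)) qs j).1].

Lemma treap_items_rcons ps e qs :
  treap_items (rcons ps e) qs -> treap_items ps (take (size ps) qs).
Proof.
rewrite /treap_items size_rcons => -[Hs Hnth Hmono].
split; first by rewrite size_take Hs ltnSn.
- move=> i Hi; rewrite nth_take // Hnth ?nth_rcons ?Hi //; exact: ltnW.
- move=> i j Hi Hj; rewrite !nth_take // => Hd.
  by apply: Hmono; rewrite ?nth_rcons ?Hi ?Hj //; apply: ltnW.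
Qed.

Lemma treap_items_behead e ps q qs :
  treap_items (e :: ps) (q :: qs) -> treap_items ps qs.
Proof.
case=> [[Hs] Hnth Hmono]; split => // [i Hi | i j Hi Hj Hd].
  exact: (Hnth i.+1).
exact: (Hmono i.+1 j.+1).
Qed.

Lemma argmin_treap_items ps qs i : treap_items ps qs -> i < size ps ->
  (forall j, j < size ps -> j != i ->
     (nth (0, 0, Leaf) ps i).1.2 < (nth (0, 0, Leaf) ps j).1.2) ->
  argmin_idx (map fst qs) = i.
Proof.
case=> Hs _ Hmono Hi Hshallow.
apply: argmin_idx_strict_min; rewrite size_map Hs // => j Hj Hji.
rewrite !(nth_map ((0, 0), (0, Leaf))) ?Hs //.
exact/Hmono/Hshallow.
Qed.

Lemma build_collect T x d f qs :
  size (collect T x d).2 <= f -> treap_items (collect T x d).2 qs ->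
  build f (collect T x d).1 qs = T.
Proof.
elim: T x d f qs => [|l IHl k r IHr] x d f qs.
  by move=> _ [/= /size0nil -> _ _]; rewrite build_nil.
rewrite /=; case: ifP => Hxk.
  case: f => [//|f] _ [Hs Hnth _].
  case: qs Hs Hnth => [//|q [|//]] _ Hnth /=.
  by have := Hnth 0 isT => /= ->; rewrite !build_nil.
case: f => [|f]; first by case: ifP; rewrite /= ?size_rcons.
case: ifP => Hxl /=; set c := collect _ x d.+1.
- rewrite size_rcons ltnS => Hf Hitems.
  have [Hs Hnth _] := Hitems; rewrite size_rcons in Hs Hnth.
  have Hroot : argmin_idx (map fst qs) = size c.2.
    apply: argmin_treap_items Hitems _ _; rewrite size_rcons // => j Hj Hji.
    have Hj' : j < size c.2 by rewrite ltn_neqAle Hji -ltnS.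
    rewrite !nth_rcons ltnn eqxx Hj' /=.
    by have /collect_depth := In_nth (0, 0, Leaf) Hj'; lia.
  case: qs Hs Hnth Hitems Hroot => [//|q qs] Hs Hnth Hitems Hroot.
  rewrite Hroot.
  have := Hnth (size c.2) (ltnSn _); rewrite nth_rcons ltnn eqxx => -> /=.
  rewrite drop_oversize ?build_nil ?IHl //; last by case: Hs => ->.
  exact: treap_items_rcons Hitems.
- move=> /= Hf Hitems.
  have Hroot : argmin_idx (map fst qs) = 0.
    apply: argmin_treap_items Hitems _ _ => // -[//|j] /= Hj _.
    by have /collect_depth := In_nth (0, 0, Leaf) Hj; lia.
  have [Hs Hnth _] := Hitems.
  case: qs Hs Hnth Hitems Hroot => [//|q qs] Hs Hnth Hitems Hroot.
  rewrite Hroot.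
  have := Hnth 0 isT => /= -> /=.
  rewrite build_nil drop0 IHr //; exact: treap_items_behead Hitems.
Qed.

(** * Search paths *)

(* Like [collect], but keeping the whole subtree rooted at each path key. *)
Fixpoint search_path (T : tree) (x d : nat) : seq ((nat * nat) * tree) :=
  match T with
  | Leaf => [::]
  | Node l k r =>
      if x == k then [:: ((k, d), T)]
      else if x < k then rcons (search_path l x d.+1) ((k, d), T)
      else ((k, d), T) :: search_path r x d.+1
  end.

Definition path_keys T x d := map (fun e => e.1.1) (search_path T x d).

Lemma size_path_keys T x d : size (path_keys T x d) = size (search_path T x d).
Proof. exact: size_map. Qed.

Lemma search_path_collect T x d :
  map fst (search_path T x d) = map fst (collect T x d).2.
Proof.
elim: T d => [|l IHl k r IHr] d //=.
case: ifP => // _; case: ifP => _ /=; last by rewrite IHr.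
by rewrite !map_rcons IHl.
Qed.

Lemma mem_inorder_node l k r y :
  y \in inorder (Node l k r) = [|| y \in inorder l, y == k | y \in inorder r].
Proof. by rewrite /= mem_cat in_cons. Qed.

Lemma search_path_subtree T x d e : List.In e (search_path T x d) ->
  [/\ e.1.1 \in inorder T, {subset inorder e.2 <= inorder T} & d <= e.1.2].
Proof.
elim: T d => [|l IHl k r IHr] d //=.
have Hself : [/\ k \in inorder (Node l k r),
    {subset inorder (Node l k r) <= inorder (Node l k r)} & d <= d].
  by split; rewrite // mem_inorder_node eqxx orbT.
case: ifP => _; first by case=> [<-|//].
case: ifP => _.
  rewrite -cats1 List.in_app_iff => -[/IHl [Hk Hsub Hd]|[<-|//]] //.
  split; [by rewrite mem_cat Hk | by move=> y /Hsub; rewrite mem_cat => -> | lia].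
case=> [<-//|/IHr [Hk Hsub Hd]].
split; [by rewrite mem_cat in_cons Hk !orbT | | lia].
by move=> y /Hsub Hy; rewrite mem_cat in_cons Hy !orbT.
Qed.

Lemma path_keys_sub T x d : {subset path_keys T x d <= inorder T}.
Proof.
move=> y /(nthP 0) [i]; rewrite size_path_keys => Hi <-.
rewrite /path_keys (nth_map ((0, 0), Leaf)) //.
by case: (search_path_subtree (In_nth ((0, 0), Leaf) Hi)).
Qed.

Lemma search_path_nested T x d e1 e2 :
  List.In e1 (search_path T x d) -> List.In e2 (search_path T x d) ->
  e1.1.2 < e2.1.2 ->
  {subset inorder e2.2 <= inorder e1.2} /\
  (if e1.2 is Node _ k _ then x != k else False).
Proof.
elim: T d => [|l IHl k r IHr] d //=.
case: ifP => Hxk; first by case=> [<-|//] [<-|//] /=; rewrite ltnn.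
case: ifP => _.
  rewrite -!cats1 !List.in_app_iff.
  case=> [H1|[<-|//]]; case=> [H2|[<-|//]]; rewrite ?ltnn //.
  - exact: IHl H1 H2.
  - by case: (search_path_subtree H1) => _ _ /=; lia.
  - move=> _; split; last by rewrite /= Hxk.
    by case: (search_path_subtree H2) => _ Hs _ y /Hs; rewrite mem_cat => ->.
case=> [<-|H1]; case=> [<-|H2]; rewrite ?ltnn //.
- move=> _; split; last by rewrite /= Hxk.
  by case: (search_path_subtree H2) => _ Hs _ y /Hs Hy; rewrite mem_cat in_cons Hy !orbT.
- by case: (search_path_subtree H1) => _ _ /=; lia.
- exact: IHr H1 H2.
Qed.

Lemma search_path_all_subtrees (P : tree -> Prop) T x d e :
  all_subtrees P T -> List.In e (search_path T x d) -> P e.2.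
Proof.
elim: T d => [|l IHl k r IHr] d //= [HT [Hl Hr]].
case: ifP => _; first by case=> [<-|//].
case: ifP => _; last by case=> [<-//|/IHr]; apply.
by rewrite -cats1 List.in_app_iff => -[/IHl|[<-|//]]; [apply|].
Qed.

Lemma pairwise_inorder_node l k r : pairwise ltn (inorder (Node l k r)) ->
  [/\ pairwise ltn (inorder l), pairwise ltn (inorder r),
      {in inorder l, forall y, y < k} & {in inorder r, forall y, k < y}].
Proof.
rewrite /= pairwise_cat pairwise_cons allrel_consr.
case/and3P => /andP [Hl _] Hpl /andP [Hr Hpr].
by split => // y Hy; [apply: (allP Hl) | apply: (allP Hr)].
Qed.

Lemma mem_inorder_left l k r y :
  pairwise ltn (inorder (Node l k r)) -> y \in inorder (Node l k r) ->
  (y \in inorder l) = (y < k).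
Proof.
case/pairwise_inorder_node => _ _ Hlk Hkr Hy; apply/idP/idP => [/Hlk //|Hyk].
by move: Hy; rewrite mem_inorder_node => /or3P [//|/eqP|/Hkr]; lia.
Qed.

Lemma mem_inorder_right l k r y :
  pairwise ltn (inorder (Node l k r)) -> y \in inorder (Node l k r) ->
  (y \in inorder r) = (k < y).
Proof.
case/pairwise_inorder_node => _ _ Hlk Hkr Hy; apply/idP/idP => [/Hkr //|Hky].
by move: Hy; rewrite mem_inorder_node => /or3P [/Hlk|/eqP|//]; lia.
Qed.

(** * Intervals of the path keys *)

Lemma in_open_lo_weaken L H0 H a y :
  in_open L H0 a -> in_open (Some a) H y -> in_open L H y.
Proof. by rewrite /in_open; case: L => [?|]; case: H0 => [?|]; case: H => [?|] /=; lia. Qed.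

Lemma in_open_hi_weaken L H0 H b y :
  in_open H0 H b -> in_open L (Some b) y -> in_open L H y.
Proof. by rewrite /in_open; case: L => [?|]; case: H0 => [?|]; case: H => [?|] /=; lia. Qed.

Lemma in_open_lo_tighten L H a y : in_open L H y -> a < y -> in_open (Some a) H y.
Proof. by rewrite /in_open; case: L => [?|]; case: H => [?|] /=; lia. Qed.

Lemma in_open_hi_tighten L H b y : in_open L H y -> y < b -> in_open L (Some b) y.
Proof. by rewrite /in_open; case: L => [?|]; case: H => [?|] /=; lia. Qed.

Lemma in_open_hi_lt L b y : in_open L (Some b) y -> y < b.
Proof. by rewrite /in_open; case: L => [?|] /=; lia. Qed.

Lemma in_open_lo_gt H a y : in_open (Some a) H y -> a < y.
Proof. by rewrite /in_open; case: H => [?|] /=; lia. Qed.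

(* The interval of the [i]-th path key, with [L] and [H] in place of -oo and +oo. *)
Definition lo_bound (L : option nat) (ks : seq nat) i :=
  if i is i'.+1 then Some (nth 0 ks i') else L.
Definition hi_bound (H : option nat) (ks : seq nat) i :=
  if i.+1 < size ks then Some (nth 0 ks i.+1) else H.

Lemma lo_bound_rcons L ks a i :
  i <= size ks -> lo_bound L (rcons ks a) i = lo_bound L ks i.
Proof. by case: i => [//|i] /= Hi; rewrite nth_rcons Hi. Qed.

Lemma hi_bound_rcons H ks a i :
  i < size ks -> hi_bound H (rcons ks a) i = hi_bound (Some a) ks i.
Proof.
move=> Hi; rewrite /hi_bound size_rcons nth_rcons ltnS Hi.
case: ltnP => // Hle.
have -> : i.+1 = size ks by lia.
by rewrite eqxx.
Qed.

Lemma lo_bound_cons L ks a i : lo_bound L (a :: ks) i.+1 = lo_bound (Some a) ks i.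
Proof. by case: i. Qed.

(* What GF needs to know about a node [S] on the search path of [x] whose key
   has the interval (lo, hi): the queried keys [U] in (lo, hi) all lie in [S],
   and the keys of [S] that the next query to [S] may hit all lie in (lo, hi). *)
Definition interval_ok (U : pred nat) (x : nat) (lo hi : option nat) (S : tree) :=
  if S is Node l k r then
    [/\ pairwise ltn (inorder S), x \in inorder S,
        {in U, forall y, in_open lo hi y -> y \in inorder S},
        x < k -> {subset k :: inorder r <= in_open lo hi} /\
          (if l is Node _ u ur then x < u -> {subset inorder ur <= in_open lo hi}
           else True)
      & k < x -> {subset k :: inorder l <= in_open lo hi} /\
          (if r is Node rl u _ then u < x -> {subset inorder rl <= in_open lo hi}
           else True)]
  else False.

Lemma interval_ok_root_left U x l k r L H d :
  pairwise ltn (inorder (Node l k r)) ->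
  {subset inorder (Node l k r) <= in_open L H} ->
  {in U, forall y, in_open L H y -> y \in inorder (Node l k r)} ->
  x \in inorder l ->
  interval_ok U x (lo_bound L (path_keys l x d) (size (path_keys l x d))) H
    (Node l k r).
Proof.
move=> Hpw Hbnd HU Hxl.
have [Hpl _ Hlk Hkr] := pairwise_inorder_node Hpw.
have Hx : x \in inorder (Node l k r) by rewrite mem_inorder_node Hxl.
set ks := path_keys l x d; set lo := lo_bound L ks (size ks).
have [Hlo_wide Hlo_open] : {subset in_open lo H <= in_open L H} /\
    (forall y, k <= y -> in_open L H y -> in_open lo H y).
  rewrite /lo; case Eks: (size ks) => [|s] /=; first by split.
  have Ha : nth 0 ks s \in inorder l by apply/path_keys_sub/mem_nth; rewrite Eks.
  have Hla : in_open L H (nth 0 ks s) by apply/Hbnd; rewrite mem_inorder_node Ha.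
  split => y Hy; first exact: in_open_lo_weaken Hla Hy.
  by move=> Hyk; apply: in_open_lo_tighten Hyk _; apply: leq_trans (Hlk _ Ha) Hy.
split => //; last by have := Hlk _ Hxl; lia.
  by move=> y Uy /Hlo_wide; apply: HU.
move=> _; split.
  move=> y; rewrite in_cons => /orP [/eqP -> | Hy].
    by apply: Hlo_open => //; apply/Hbnd; rewrite mem_inorder_node eqxx orbT.
  by apply: Hlo_open; [exact/ltnW/Hkr | apply/Hbnd; rewrite mem_inorder_node Hy !orbT].
case El: l => [//|ul u ur] Hxu y Hy.
move: Hpl; rewrite El => /pairwise_inorder_node [_ _ _ Hur].
have Eks : ks = rcons (path_keys ul x d.+1) u.
  by rewrite /ks El /path_keys /= ifF ?Hxu ?map_rcons //; lia.
rewrite /lo Eks size_rcons /= nth_rcons ltnn eqxx.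
apply: in_open_lo_tighten (Hur _ Hy).
by apply/Hbnd; rewrite mem_inorder_node El mem_inorder_node Hy !orbT.
Qed.

Lemma interval_ok_root_right U x l k r L H d :
  pairwise ltn (inorder (Node l k r)) ->
  {subset inorder (Node l k r) <= in_open L H} ->
  {in U, forall y, in_open L H y -> y \in inorder (Node l k r)} ->
  x \in inorder r ->
  interval_ok U x L (hi_bound H (k :: path_keys r x d) 0) (Node l k r).
Proof.
move=> Hpw Hbnd HU Hxr.
have [_ Hpr Hlk Hkr] := pairwise_inorder_node Hpw.
have Hx : x \in inorder (Node l k r) by rewrite mem_inorder_node Hxr !orbT.
set ks := path_keys r x d; set hi := hi_bound H (k :: ks) 0.
have [Hhi_wide Hhi_open] : {subset in_open L hi <= in_open L H} /\
    (forall y, y <= k -> in_open L H y -> in_open L hi y).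
  rewrite /hi /hi_bound /=; case Eks: ks => [|a ks'] /=; first by split.
  have Ha : a \in inorder r by apply: (@path_keys_sub r x d); rewrite -/ks Eks mem_head.
  have Hra : in_open L H a by apply/Hbnd; rewrite mem_inorder_node Ha !orbT.
  split => y Hy; first exact: in_open_hi_weaken Hra Hy.
  by move=> Hyk; apply: in_open_hi_tighten Hyk _; apply: leq_ltn_trans Hy (Hkr _ Ha).
split => //; first by move=> y Uy /Hhi_wide; apply: HU.
  by have := Hkr _ Hxr; lia.
move=> _; split.
  move=> y; rewrite in_cons => /orP [/eqP -> | Hy].
    by apply: Hhi_open => //; apply/Hbnd; rewrite mem_inorder_node eqxx orbT.
  by apply: Hhi_open; [exact/ltnW/Hlk | apply/Hbnd; rewrite mem_inorder_node Hy].
case Er: r => [//|rl u rr] Hux y Hy.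
move: Hpr; rewrite Er => /pairwise_inorder_node [_ _ Hrl _].
have Eks : ks = u :: path_keys rr x d.+1.
  by rewrite /ks Er /path_keys /= ifF ?ifF //; lia.
rewrite /hi Eks /hi_bound /=.
apply: in_open_hi_tighten (Hrl _ Hy).
by apply/Hbnd; rewrite mem_inorder_node Er mem_inorder_node Hy !orbT.
Qed.

Lemma interval_ok_query_node U x l k r L H :
  pairwise ltn (inorder (Node l k r)) ->
  {in U, forall y, in_open L H y -> y \in inorder (Node l k r)} ->
  x == k -> interval_ok U x L H (Node l k r).
Proof.
move=> Hpw HU /eqP ->; split; rewrite ?ltnn //.
by rewrite mem_inorder_node eqxx orbT.
Qed.

Lemma left_subtree_bounds (U : pred nat) l k r L H :
  pairwise ltn (inorder (Node l k r)) ->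
  {subset inorder (Node l k r) <= in_open L H} ->
  {in U, forall y, in_open L H y -> y \in inorder (Node l k r)} ->
  {subset inorder l <= in_open L (Some k)} /\
  {in U, forall y, in_open L (Some k) y -> y \in inorder l}.
Proof.
move=> Hpw Hbnd HU; have [_ _ Hlk Hkr] := pairwise_inorder_node Hpw.
have Hk : in_open L H k by apply/Hbnd; rewrite mem_inorder_node eqxx orbT.
split=> y.
  move=> Hy; apply: in_open_hi_tighten (Hlk _ Hy).
  by apply/Hbnd; rewrite mem_inorder_node Hy.
move=> Uy Hy; have := HU y Uy (in_open_hi_weaken Hk Hy).
by rewrite mem_inorder_node => /or3P [//|/eqP|/Hkr]; have := in_open_hi_lt Hy; lia.
Qed.

Lemma right_subtree_bounds (U : pred nat) l k r L H :
  pairwise ltn (inorder (Node l k r)) ->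
  {subset inorder (Node l k r) <= in_open L H} ->
  {in U, forall y, in_open L H y -> y \in inorder (Node l k r)} ->
  {subset inorder r <= in_open (Some k) H} /\
  {in U, forall y, in_open (Some k) H y -> y \in inorder r}.
Proof.
move=> Hpw Hbnd HU; have [_ _ Hlk Hkr] := pairwise_inorder_node Hpw.
have Hk : in_open L H k by apply/Hbnd; rewrite mem_inorder_node eqxx orbT.
split=> y.
  move=> Hy; apply: in_open_lo_tighten (Hkr _ Hy).
  by apply/Hbnd; rewrite mem_inorder_node Hy !orbT.
move=> Uy Hy; have := HU y Uy (in_open_lo_weaken Hk Hy).
by rewrite mem_inorder_node => /or3P [/Hlk|/eqP|//]; have := in_open_lo_gt Hy; lia.
Qed.

Lemma path_intervals_ok (U : pred nat) x T L H d :
  pairwise ltn (inorder T) -> {subset inorder T <= in_open L H} ->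
  {in U, forall y, in_open L H y -> y \in inorder T} -> x \in inorder T ->
  forall i, i < size (search_path T x d) ->
  interval_ok U x (lo_bound L (path_keys T x d) i) (hi_bound H (path_keys T x d) i)
    (nth ((0, 0), Leaf) (search_path T x d) i).2.
Proof.
elim: T L H d => [//|l IHl k r IHr] L H d Hpw Hbnd HU Hx.
have [Hpl Hpr _ _] := pairwise_inorder_node Hpw.
case: (ltngtP x k) => Hxk.
- have Hxl : x \in inorder l by rewrite (mem_inorder_left Hpw Hx).
  have [Hbl HUl] := left_subtree_bounds Hpw Hbnd HU.
  have Epath : search_path (Node l k r) x d =
      rcons (search_path l x d.+1) ((k, d), Node l k r).
    by rewrite /= ifF ?Hxk //; lia.
  have Ekeys : path_keys (Node l k r) x d = rcons (path_keys l x d.+1) k.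
    by rewrite /path_keys Epath map_rcons.
  rewrite Epath Ekeys size_rcons => i; rewrite ltnS leq_eqVlt => /orP [/eqP -> | Hi].
    rewrite nth_rcons ltnn eqxx -size_path_keys lo_bound_rcons //.
    rewrite /hi_bound size_rcons ltnn /=; exact: interval_ok_root_left.
  rewrite nth_rcons Hi lo_bound_rcons ?size_path_keys 1?ltnW //.
  by rewrite hi_bound_rcons ?size_path_keys //; apply: IHl.
- have Hxr : x \in inorder r by rewrite (mem_inorder_right Hpw Hx).
  have [Hbr HUr] := right_subtree_bounds Hpw Hbnd HU.
  have Epath : search_path (Node l k r) x d =
      ((k, d), Node l k r) :: search_path r x d.+1.
    by rewrite /= !ifF //; lia.
  have Ekeys : path_keys (Node l k r) x d = k :: path_keys r x d.+1.
    by rewrite /path_keys Epath.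
  rewrite Epath Ekeys => -[_|i Hi]; first exact: interval_ok_root_right.
  by rewrite lo_bound_cons; apply: IHr.
- rewrite /path_keys /= Hxk eqxx => -[|//] _.
  exact: interval_ok_query_node.
Qed.

(** * The next query to a stable node *)

Lemma strong_next_in_interval U x y lo hi l k r :
  interval_ok U x lo hi (Node l k r) -> x != k -> y \in inorder (Node l k r) ->
  (x \in inorder l) != (y \in inorder l) -> in_open lo hi y.
Proof.
case=> Hpw Hx _ Hlt Hgt Hxk Hy.
rewrite (mem_inorder_left Hpw Hx) (mem_inorder_left Hpw Hy).
case: (ltngtP x k) Hxk => // Hxk _; case: (ltnP y k) => // Hyk _.
  by apply: (Hlt Hxk).1; rewrite in_cons (mem_inorder_right Hpw Hy); lia.
by apply: (Hgt Hxk).1; rewrite in_cons (mem_inorder_left Hpw Hy) Hyk orbT.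
Qed.

Definition cls3 (A B C : seq nat) (y : nat) : nat :=
  if y \in A then 0 else if y \in B then 1 else if y \in C then 2 else 3.

Lemma cls3P A B C y :
  [/\ cls3 A B C y = 0 -> y \in A, cls3 A B C y = 1 -> y \in B
    & cls3 A B C y = 2 -> y \in C].
Proof. by rewrite /cls3; case: ifP => //; case: ifP => //; case: ifP. Qed.

Lemma weak_left_next_in_interval U x y lo hi ul u ur k r :
  let cls := cls3 (inorder ul) (inorder ur) (inorder r) in
  interval_ok U x lo hi (Node (Node ul u ur) k r) ->
  cls x < 3 -> cls y = (cls x).+1 %% 3 -> in_open lo hi y.
Proof.
move=> cls [Hpw _ _ Hlt Hgt].
have [/pairwise_inorder_node [_ _ Hul _] _ Hlk Hkr] := pairwise_inorder_node Hpw.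
have [X0 X1 X2] := cls3P (inorder ul) (inorder ur) (inorder r) x.
have [Y0 Y1 Y2] := cls3P (inorder ul) (inorder ur) (inorder r) y.
rewrite /cls; case: (cls3 _ _ _ x) X0 X1 X2 => [|[|[|//]]] X0 X1 X2 _ /= Hy.
- have Hx := X0 erefl.
  have Hxk : x < k by apply: Hlk; rewrite mem_inorder_node Hx.
  exact: (Hlt Hxk).2 (Hul _ Hx) _ (Y1 Hy).
- have Hx := X1 erefl.
  have Hxk : x < k by apply: Hlk; rewrite mem_inorder_node Hx !orbT.
  by apply: (Hlt Hxk).1; rewrite in_cons Y2 ?orbT.
- apply: (Hgt (Hkr _ (X2 erefl))).1.
  by rewrite in_cons mem_inorder_node Y0 //= orbT.
Qed.

Lemma weak_right_next_in_interval U x y lo hi l k rl u rr :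
  let cls := cls3 (inorder rr) (inorder rl) (inorder l) in
  interval_ok U x lo hi (Node l k (Node rl u rr)) ->
  cls x < 3 -> cls y = (cls x).+1 %% 3 -> in_open lo hi y.
Proof.
move=> cls [Hpw _ _ Hlt Hgt].
have [_ /pairwise_inorder_node [_ _ _ Hrr] Hlk Hkr] := pairwise_inorder_node Hpw.
have [X0 X1 X2] := cls3P (inorder rr) (inorder rl) (inorder l) x.
have [Y0 Y1 Y2] := cls3P (inorder rr) (inorder rl) (inorder l) y.
rewrite /cls; case: (cls3 _ _ _ x) X0 X1 X2 => [|[|[|//]]] X0 X1 X2 _ /= Hy.
- have Hx := X0 erefl.
  have Hkx : k < x by apply: Hkr; rewrite mem_inorder_node Hx !orbT.
  exact: (Hgt Hkx).2 (Hrr _ Hx) _ (Y1 Hy).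
- have Hx := X1 erefl.
  have Hkx : k < x by apply: Hkr; rewrite mem_inorder_node Hx.
  by apply: (Hgt Hkx).1; rewrite in_cons Y2 ?orbT.
- apply: (Hlt (Hlk _ (X2 erefl))).1.
  by rewrite in_cons mem_inorder_node Y0 //= !orbT.
Qed.

Lemma cyclic3_next cls (Xv : seq nat) m : cyclic3 cls Xv -> m.+1 < size Xv ->
  cls (nth 0 Xv m) < 3 /\ cls (nth 0 Xv m.+1) = (cls (nth 0 Xv m)).+1 %% 3.
Proof.
case=> p _ Hcls Hm; rewrite (Hcls m) ?(ltnW Hm) // (Hcls m.+1) //.
split; first by rewrite ltn_mod.
by rewrite addnS -[in RHS]addn1 modnDml addn1.
Qed.

Lemma filter_find (a : pred nat) s : has a s ->
  filter a s = nth 0 s (find a s) :: filter a (drop (find a s).+1 s).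
Proof.
elim: s => [//|b s IH] /=.
case Hb: (a b) => /= H; first by rewrite drop0.
by rewrite IH.
Qed.

Lemma filter_consecutive X t (a : pred nat) :
  t < size X -> a (nth 0 X t) -> has a (drop t.+1 X) ->
  exists m, [/\ m.+1 < size (filter a X), nth 0 (filter a X) m = nth 0 X t
            & nth 0 (filter a X) m.+1 = nth 0 (drop t.+1 X) (find a (drop t.+1 X))].
Proof.
move=> Ht Hx Hh.
have -> : filter a X = filter a (take t X) ++
    nth 0 X t :: (nth 0 (drop t.+1 X) (find a (drop t.+1 X)) ::
                  filter a (drop (find a (drop t.+1 X)).+1 (drop t.+1 X))).
  by rewrite -{1}(cat_take_drop t X) (drop_nth 0 Ht) filter_cat /= Hx (filter_find Hh).
set m := size (filter a (take t X)); exists m.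
have Hm : (m.+1 < m) = false by lia.
by rewrite size_cat /= !nth_cat ltnn subnn Hm subSnn; split => //; lia.
Qed.

Lemma query_node_inner (l : tree) k r x :
  x \in inorder (Node l k r) -> x != k -> is_inner (Node l k r).
Proof.
rewrite mem_inorder_node => Hx /negbTE Hxk; rewrite Hxk /= in Hx.
by case: l Hx => [|? ? ?]; case: r => [|? ? ?].
Qed.

Lemma next_query_in_interval X t U lo hi S :
  t < size X -> interval_ok U (nth 0 X t) lo hi S ->
  (if S is Node _ k _ then nth 0 X t != k else False) ->
  (is_inner S -> strongly_stable X S \/ weakly_stable_left X S \/ weakly_stable_right X S) ->
  has (mem (inorder S)) (drop t.+1 X) ->
  in_open lo hi (nth 0 (drop t.+1 X) (find (mem (inorder S)) (drop t.+1 X))).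
Proof.
case: S => [//|l k r] Ht Hok Hxk Hstable Hh.
have Hx : nth 0 X t \in inorder (Node l k r) by case: Hok.
have [m [Hm Hmx Hmy]] := filter_consecutive Ht Hx Hh.
have Hy := nth_find 0 Hh.
have ES : subseq_at X (Node l k r) = filter (mem (inorder (Node l k r))) X by [].
case: (Hstable (query_node_inner Hx Hxk)) => [Hs | [Hw | Hw]].
- apply: strong_next_in_interval Hok Hxk Hy _.
  by have := Hs m; rewrite ES Hmx Hmy; apply.
- case El: l Hw => [|ul u ur] [_ Hcyc]; first by case: Hcyc.
  subst l.
  have [] := cyclic3_next Hcyc Hm; rewrite ES Hmx Hmy => Hlt Hnext.
  exact: weak_left_next_in_interval Hok Hlt Hnext.
- case Er: r Hw => [|rl u rr] [_ Hcyc]; first by case: Hcyc.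
  subst r.
  have [] := cyclic3_next Hcyc Hm; rewrite ES Hmx Hmy => Hlt Hnext.
  exact: weak_right_next_in_interval Hok Hlt Hnext.
Qed.

Lemma find_le_of_first (p q r : pred nat) s :
  {in s, forall y, q y -> r y} -> (has r s -> p (nth 0 s (find r s))) ->
  find p s <= find q s.
Proof.
move=> Hqr Hp; case Hq: (has q s); last by rewrite (hasNfind (negbT Hq)) find_size.
have Hqs : find q s < size s by rewrite -has_find.
have Hr : r (nth 0 s (find q s)) by apply/Hqr/nth_find; rewrite ?mem_nth.
have Hrs : has r s by apply/hasP; exists (nth 0 s (find q s)); rewrite ?mem_nth.
have Hrq : find r s <= find q s.
  by rewrite leqNgt; apply/negP => /(before_find 0); rewrite Hr.
apply: leq_trans Hrq; rewrite leqNgt; apply/negP => /(before_find 0).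
by rewrite (Hp Hrs).
Qed.

(* A shallower path node gets a [tau] no larger than a deeper one: both
   [tau]s are first visits, the shallower one to its whole subtree. *)
Lemma tau_path_mono X T t i j :
  let x := nth 0 X t in
  let ps := search_path T x 0 in
  let ks := path_keys T x 0 in
  pairwise ltn (inorder T) -> {subset X <= inorder T} -> mixed_stable X T ->
  t < size X -> i < size ps -> j < size ps ->
  (nth ((0, 0), Leaf) ps i).1.2 < (nth ((0, 0), Leaf) ps j).1.2 ->
  tau X t (lo_bound None ks i) (hi_bound None ks i) <=
  tau X t (lo_bound None ks j) (hi_bound None ks j).
Proof.
move=> x ps ks Hpw HXT Hms Ht Hi Hj Hd.
have Hx : x \in inorder T by apply/HXT/mem_nth.
have Hok := path_intervals_ok (U := mem X) (L := None) (H := None) (d := 0) Hpw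
  (fun _ _ => isT) (fun y Hy _ => HXT y Hy) Hx.
have [Hsub Hxk] := search_path_nested (In_nth ((0, 0), Leaf) Hi) (In_nth ((0, 0), Leaf) Hj) Hd.
have Hstable := search_path_all_subtrees Hms (In_nth ((0, 0), Leaf) Hi).
rewrite /tau leq_add2l.
apply: (find_le_of_first (r := mem (inorder (nth ((0, 0), Leaf) ps i).2))).
  move: (Hok j Hj) Hsub; case: (nth _ ps j).2 => [//|l k r] [_ _ HUj _ _] Hsub y Hy Hin.
  by apply/Hsub/HUj => //; apply: mem_drop Hy.
exact: next_query_in_interval Ht (Hok i Hi) Hxk Hstable.
Qed.

Lemma gf_step_stable T X t :
  pairwise ltn (inorder T) -> {subset X <= inorder T} -> mixed_stable X T ->
  t < size X -> gf_step X t T = T.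
Proof.
move=> Hpw HXT Hms Ht; set x := nth 0 X t.
have Efst := search_path_collect T x 0.
have Esize : size (search_path T x 0) = size (collect T x 0).2.
  by rewrite -(size_map fst) Efst size_map.
have Ekeys : map (fun e => e.1.1) (collect T x 0).2 = path_keys T x 0.
  by rewrite /path_keys !(map_comp fst fst) Efst.
have Edepth i : i < size (collect T x 0).2 ->
    (nth (0, 0, Leaf) (collect T x 0).2 i).1 = (nth ((0, 0), Leaf) (search_path T x 0) i).1.
  by move=> Hi; rewrite -!(nth_map _ (0, 0) fst) ?Esize // Efst.
rewrite /gf_step -/x; apply: build_collect => //.
split; first by rewrite size_map size_iota.
  by move=> i Hi; rewrite (nth_map 0) ?size_iota // nth_iota.
move=> i j Hi Hj Hd.
rewrite !(nth_map 0) ?size_iota // !nth_iota //= Ekeys.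
have := @tau_path_mono X T t i j Hpw HXT Hms Ht; rewrite -/x !Esize -!Edepth //.
move=> /(_ Hi Hj Hd); rewrite /lexlt /lo_bound /hi_bound /= !add0n => Htau.
by move: Htau Hd; rewrite size_path_keys Esize; lia.
Qed.

Lemma leaf_keys_sub T : {subset leaf_keys T <= inorder T}.
Proof.
elim: T => [|l IHl k r IHr] //= y.
have Hsub : y \in leaf_keys l ++ leaf_keys r -> y \in inorder l ++ k :: inorder r.
  by rewrite !mem_cat in_cons => /orP [/IHl -> | /IHr ->]; rewrite ?orbT.
by case: l IHl Hsub => [|? ? ?] IHl Hsub; case: r IHr Hsub => [|? ? ?] IHr Hsub.
Qed.

Theorem lemma2 (n : nat) (T : tree) (X : seq nat) :
  is_bst_on n T ->
  full T ->
  (forall x, x \in X -> x \in leaf_keys T) ->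
  mixed_stable X T ->
  forall t, t <= size X -> gf_tree X T t = T.
Proof.
move=> Hbst _ Hleaf Hms.
have Hpw : pairwise ltn (inorder T).
  by rewrite Hbst -sorted_pairwise ?iota_ltn_sorted //; apply: ltn_trans.
have HXT : {subset X <= inorder T} by move=> y /Hleaf /leaf_keys_sub.
elim=> [//|t IH] Ht /=.
by rewrite IH ?(ltnW Ht) // gf_step_stable.
Qed.
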